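(* Let $L$ be a C-lattice domain in which every element is a join of principal elements. If $L$ is sharp, then $L$ is pseudo-Dedekind, i.e. $(x:a)$ is a principal element whenever $x,a\in L$ and $x$ is principal.
   Context: A multiplicative lattice is a complete lattice $(L,\le)$ with bottom $0$ and top $1$ which is also a commutative monoid with identity $1$ such that $a(\bigvee_\alpha b_\alpha)=\bigvee_\alpha(ab_\alpha)$ for all $a,b_\alpha\in L$. For $x,y\in L$, $(y:x)=\bigvee\{a\in L: ax\le y\}$. An element $c$ is compact if $c\le\bigvee S$ implies $c\le\bigvee T$ for some finite $T\subseteq S$. A C-lattice is a multiplicative lattice in which $1$ is compact, the product of two compact elements is compact, and every element is a join of compact elements. A proper element $p\ne1$ is prime if $xy\le p$ implies $x\le p$ or $y\le p$; $L$ is a domain if $0$ is prime. An element $x$ is principal if $y\wedge zx=((y:x)\wedge z)x$ and $y\vee(z:x)=((yx\vee z):x)$ for all $y,z\in L$. $L$ is sharp if whenever $a_1a_2\le b$ with $a_1,a_2,b\in L$, there exist $b_1,b_2\in L$ with $a_i\le b_i$ ($i=1,2$) and $b=b_1b_2$. *)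

From Stdlib Require Import List.


Record mlattice := MLattice {
  car :> Type;
  le : car -> car -> Prop;
  sup : (car -> Prop) -> car;
  mul : car -> car -> car;
  one : car;
  le_refl : forall x, le x x;
  le_trans : forall x y z : car, le x y -> le y z -> le x z;
  le_antisym : forall x y, le x y -> le y x -> x = y;
  sup_ub : forall (S : car -> Prop) x, S x -> le x (sup S);
  sup_least : forall (S : car -> Prop) y, (forall x, S x -> le x y) -> le (sup S) y;
  one_top : forall x, le x one;
  mulC : forall x y, mul x y = mul y x;
  mulA : forall x y z, mul x (mul y z) = mul (mul x y) z;
  mul1 : forall x, mul one x = x;
  mul_sup : forall a (S : car -> Prop),
      mul a (sup S) = sup (fun y => exists b, S b /\ y = mul a b)
}.

Arguments le {m}. Arguments sup {m}. Arguments mul {m}. Arguments one {m}.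

Section Defs.
Variable L : mlattice.

Definition zero : L := sup (fun _ : L => False).
Definition join (x y : L) : L := sup (fun z => z = x \/ z = y).
Definition meet (x y : L) : L := sup (fun z => le z x /\ le z y).
Definition colon (y x : L) : L := sup (fun a => le (mul a x) y).

Definition compact (c : L) : Prop :=
  forall S : L -> Prop, le c (sup S) ->
    exists T : list L, (forall t, In t T -> S t) /\ le c (sup (fun t => In t T)).

Definition C_lattice : Prop :=
  compact (@one L) /\
  (forall a b : L, compact a -> compact b -> compact (mul a b)) /\
  (forall x : L, exists S : L -> Prop, (forall c, S c -> compact c) /\ x = sup S).

Definition prime (p : L) : Prop :=
  p <> @one L /\ forall x y : L, le (mul x y) p -> le x p \/ le y p.

Definition domain : Prop := prime (zero).

Definition principal (x : L) : Prop :=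
  (forall y z : L, meet y (mul z x) = mul (meet (colon y x) z) x) /\
  (forall y z : L, join y (colon z x) = colon (join (mul y x) z) x).

Definition principally_generated : Prop :=
  forall x : L, exists S : L -> Prop, (forall c, S c -> principal c) /\ x = sup S.

Definition sharp : Prop :=
  forall a1 a2 b : L, le (mul a1 a2) b ->
    exists b1 b2, le a1 b1 /\ le a2 b2 /\ b = mul b1 b2.

Definition pseudo_Dedekind : Prop :=
  forall x a : L, principal x -> principal (colon x a).

End Defs.

(** Sharpness applied to [(x:a) a <= x] factors [x = (x:a) b] with [a <= b]
    (the first factor can be taken to be [(x:a)] itself, since [b1 a <= b1 b2 = x]
    forces [b1 <= (x:a)]).  If [x = 0], primality of [0] makes [(x:a) = 0] or
    [a = 0], and both [0] and [(0:0) = 1] are principal.  If [x <> 0], the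
    principal element [x] is cancellative in a domain, and a factor of a
    cancellative principal element is again principal. *)

From Stdlib Require Import Classical.

Arguments le_refl {m}.
Arguments le_trans {m} [x y z].
Arguments le_antisym {m} [x y].
Arguments sup_ub {m} S [x].
Arguments sup_least {m} S [y].
Arguments one_top {m}.
Arguments mulC {m}.
Arguments mulA {m}.
Arguments mul1 {m}.
Arguments mul_sup {m}.

Section Lattice.
Variable L : mlattice.
Implicit Types a b c t s x y z : L.

Lemma zero_le x : le (zero L) x.
Proof. apply sup_least. intros _ []. Qed.

Lemma le_zero_eq x : le x (zero L) -> x = zero L.
Proof. intro H. apply le_antisym; [exact H | apply zero_le]. Qed.

Lemma meet_le_l y z : le (meet L y z) y.
Proof. apply sup_least. now intros t [H _]. Qed.

Lemma meet_le_r y z : le (meet L y z) z.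
Proof. apply sup_least. now intros t [_ H]. Qed.

Lemma meet_greatest t y z : le t y -> le t z -> le t (meet L y z).
Proof. intros. apply sup_ub. now split. Qed.

Lemma join_le_l y z : le y (join L y z).
Proof. apply sup_ub. now left. Qed.

Lemma join_le_r y z : le z (join L y z).
Proof. apply sup_ub. now right. Qed.

Lemma join_least t y z : le y t -> le z t -> le (join L y z) t.
Proof. intros. apply sup_least. now intros s [-> | ->]. Qed.

Lemma join_zero_r y : join L y (zero L) = y.
Proof.
  apply le_antisym; [apply join_least; [apply le_refl | apply zero_le] | apply join_le_l].
Qed.

Lemma mul_le_mono_l a y z : le y z -> le (mul a y) (mul a z).
Proof.
  intro Hyz.
  assert (Ez : z = join L y z).
  { apply le_antisym; [apply join_le_r | now apply join_least; [| apply le_refl]]. }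
  rewrite Ez. unfold join. rewrite mul_sup. apply sup_ub. now exists y; split; [left|].
Qed.

Lemma mul_le_mono_r a y z : le y z -> le (mul y a) (mul z a).
Proof. intro. rewrite (mulC y), (mulC z). now apply mul_le_mono_l. Qed.

Lemma mul_join_le y z c : le (mul (join L y z) c) (join L (mul y c) (mul z c)).
Proof.
  rewrite mulC. unfold join at 1. rewrite mul_sup. apply sup_least.
  intros t [b [[-> | ->] ->]]; rewrite mulC; [apply join_le_l | apply join_le_r].
Qed.

Lemma mul_zero_r a : mul a (zero L) = zero L.
Proof.
  apply le_zero_eq. unfold zero at 1. rewrite mul_sup.
  apply sup_least. now intros t [b [[] _]].
Qed.

Lemma mul_one_r a : mul a one = a.
Proof. rewrite mulC. apply mul1. Qed.

Lemma colon_greatest t y x : le (mul t x) y -> le t (colon L y x).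
Proof. intro H. now apply sup_ub. Qed.

Lemma mul_colon_le y x : le (mul (colon L y x) x) y.
Proof.
  unfold colon. rewrite mulC, mul_sup. apply sup_least.
  intros t [b [Hb ->]]. now rewrite mulC.
Qed.

Lemma colon_le_mono y z x : le y z -> le (colon L y x) (colon L z x).
Proof. intro. apply colon_greatest. eapply le_trans; [apply mul_colon_le | assumption]. Qed.

Lemma colon_eq_one x a : le a x -> colon L x a = one.
Proof.
  intro. apply le_antisym; [apply one_top |]. apply colon_greatest. now rewrite mul1.
Qed.

Lemma colon_one_r y : colon L y one = y.
Proof.
  apply le_antisym.
  - rewrite <- (mul_one_r (colon L y one)). apply mul_colon_le.
  - apply colon_greatest. rewrite mul_one_r. apply le_refl.
Qed.

Lemma principal_zero : principal L (zero L).
Proof.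
  split; intros y z.
  - rewrite !mul_zero_r. apply le_zero_eq, meet_le_r.
  - rewrite !colon_eq_one by apply zero_le. apply le_antisym; [apply one_top | apply join_le_r].
Qed.

Lemma principal_one : principal L one.
Proof. split; intros y z; now rewrite ?colon_one_r, ?mul_one_r. Qed.

Lemma domain_mul_eq_zero a b :
  domain L -> mul a b = zero L -> a = zero L \/ b = zero L.
Proof.
  intros [_ Hprime] Hab.
  destruct (Hprime a b) as [Ha | Hb]; [rewrite Hab; apply le_refl | |];
    [left | right]; now apply le_zero_eq.
Qed.

Lemma colon_zero_domain x : domain L -> x <> zero L -> colon L (zero L) x = zero L.
Proof.
  intros Hdom Hx. apply le_zero_eq, sup_least. intros a Ha.
  destruct (domain_mul_eq_zero a x Hdom (le_zero_eq _ Ha)) as [-> | Hx0].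
  - apply le_refl.
  - contradiction.
Qed.

Definition cancellative c : Prop := forall t s, le (mul t c) (mul s c) -> le t s.

Lemma cancellative_mul_r b c : cancellative (mul b c) -> cancellative c.
Proof.
  intros Hbc t s Hts. apply Hbc.
  rewrite (mulC b c), !mulA. now apply mul_le_mono_r.
Qed.

(** [(t x : x) = t \/ (0 : x)] by the second principal identity, and [(0 : x) = 0]. *)
Lemma principal_cancellative x :
  domain L -> principal L x -> x <> zero L -> cancellative x.
Proof.
  intros Hdom [_ Hcolon] Hx t s Hts.
  apply colon_greatest in Hts.
  rewrite <- (join_zero_r (mul s x)), <- Hcolon, colon_zero_domain, join_zero_r in Hts
    by assumption.
  exact Hts.
Qed.

Lemma colon_mul_cancellative y b c :
  cancellative c -> colon L (mul y c) (mul b c) = colon L y b.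
Proof.
  intro Hc. apply le_antisym; apply sup_least; intros a Ha; apply colon_greatest.
  - apply Hc. now rewrite <- mulA.
  - rewrite mulA. now apply mul_le_mono_r.
Qed.

Lemma principal_factor b c :
  principal L (mul b c) -> cancellative (mul b c) -> principal L b.
Proof.
  intros [Hmeet Hcolon] Hbc.
  pose proof (cancellative_mul_r b c Hbc) as Hc.
  split; intros y z; apply le_antisym.
  - apply Hc. rewrite <- mulA, <- (colon_mul_cancellative y b c Hc), <- Hmeet.
    apply meet_greatest.
    + apply mul_le_mono_r, meet_le_l.
    + rewrite mulA. apply mul_le_mono_r, meet_le_r.
  - apply meet_greatest.
    + eapply le_trans; [apply mul_le_mono_r, meet_le_l | apply mul_colon_le].
    + apply mul_le_mono_r, meet_le_r.
  - apply join_least; apply colon_greatest.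
    + apply join_le_l.
    + eapply le_trans; [apply mul_colon_le | apply join_le_r].
  - rewrite <- (colon_mul_cancellative z b c Hc),
      <- (colon_mul_cancellative (join L (mul y b) z) b c Hc), Hcolon.
    apply colon_le_mono. rewrite mulA. apply mul_join_le.
Qed.

Lemma sharp_colon_factor x a :
  sharp L -> exists b, le a b /\ x = mul (colon L x a) b.
Proof.
  intro Hsharp.
  destruct (Hsharp (colon L x a) a x (mul_colon_le x a)) as [b1 [b2 [Hb1 [Hb2 Hx]]]].
  assert (Hcolon : colon L x a = b1).
  { apply le_antisym; [exact Hb1 |]. apply colon_greatest.
    rewrite Hx. now apply mul_le_mono_l. }
  exists b2. rewrite Hcolon. now split.
Qed.

End Lattice.

Theorem proposition3p2 (L : mlattice) :
  C_lattice L -> domain L -> principally_generated L -> sharp L ->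
  pseudo_Dedekind L.
Proof.
  intros _ Hdom _ Hsharp x a Hx.
  destruct (sharp_colon_factor L x a Hsharp) as [b [Hab Hfactor]].
  destruct (classic (x = zero L)) as [-> | Hx0].
  - destruct (domain_mul_eq_zero L _ _ Hdom (eq_sym Hfactor)) as [-> | ->].
    + apply principal_zero.
    + rewrite colon_eq_one by assumption. apply principal_one.
  - apply (principal_factor L _ b); rewrite <- Hfactor; [exact Hx |].
    now apply principal_cancellative.
Qed.
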